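(* Let $(X,T)$ be a topological dynamical system and fix the system of coefficients $c_S^n=2^{-n}$. Then for any open cover $\mathscr U$ of $X$, $\operatorname{Acc}(X,\mathscr U,T)=\frac12\operatorname{Asc}(X,\mathscr U,T)$.
   Context: $(X,T)$: compact Hausdorff $X$, continuous $T$. $n^*=\{0,\dots,n-1\}$; $\mathscr U_S=\bigvee_{i\in S}T^{-i}\mathscr U$ ($\mathscr U_\emptyset=\{X\}$); $N(\mathscr U)$ is the minimal cardinality of a subcover. $\operatorname{Asc}(X,\mathscr U,T)=\lim_{n\to\infty}\frac1n\sum_{S\subset n^*}c_S^n\log N(\mathscr U_S)$ and the average configuration complexity is $\operatorname{Acc}(X,\mathscr U,T)=\lim_{n\to\infty}\frac1n\sum_{S\subset n^*,\,0\in S}c_S^n\log N(\mathscr U_S)$. *)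

From HB Require Import structures.
From mathcomp Require Import all_boot all_order all_algebra.
From mathcomp Require Import all_classical all_reals all_analysis.
Set Implicit Arguments. Unset Strict Implicit. Unset Printing Implicit Defensive.
Import Order.TTheory GRing.Theory Num.Theory.
Local Open Scope classical_set_scope.
Local Open Scope ring_scope.

Section Defs.
Context {X : topologicalType}.

Definition has_subcover_of_size (U : set (set X)) (n : nat) : Prop :=
  exists f : 'I_n -> set X, (forall i, U (f i)) /\ (forall x, exists i, f i x).

(* N(U): minimal cardinality of a subcover (0 if no finite subcover exists,
   which never happens for open covers of a compact space). *)
Definition Ncov (U : set (set X)) : nat :=
  match pselect (exists n, `[< has_subcover_of_size U n >]) with
  | left h => ex_minn h
  | right _ => 0%N
  end.

(* U_S = \/_{i in S} T^{-i} U, for S a subset of n^* = {0,...,n-1};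
   U_emptyset = {X}. *)
Definition joinS (T : X -> X) (U : set (set X)) (n : nat) (S : {set 'I_n})
  : set (set X) :=
  [set V | exists A : 'I_n -> set X,
     (forall i, i \in S -> U (A i)) /\
     V = \bigcap_(i in [set i : 'I_n | i \in S]) ((iter i T) @^-1` (A i))].

Definition has0 (n : nat) (S : {set 'I_n}) : bool :=
  [exists i in S, val i == 0%N].

Definition asc_seq (R : realType) (T : X -> X) (U : set (set X)) (n : nat) : R :=
  n%:R^-1 * \sum_(S : {set 'I_n}) (2%:R ^- n) * ln (Ncov (joinS T U S))%:R.

Definition acc_seq (R : realType) (T : X -> X) (U : set (set X)) (n : nat) : R :=
  n%:R^-1 * \sum_(S : {set 'I_n} | has0 S) (2%:R ^- n) * ln (Ncov (joinS T U S))%:R.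

End Defs.

(* Let a_n be the sum over S ⊆ n^* of 2^-n log N(U_S).  A subset of (m+n)^* is
   A ⊔ (m + B) with A ⊆ m^*, B ⊆ n^*, and U_{A ⊔ (m+B)} is refined by
   U_A ∨ T^{-m} U_B, so N(U_{A ⊔ (m+B)}) <= N(U_A) N(U_B).  Summing, a is
   subadditive and Fekete's lemma gives Asc = lim a_n / n.  Taking m = 1, the
   same estimate bounds both the part of a_{k+1} over S ∋ 0 (the Acc sum) and the
   part over S ∌ 0 by a_k / 2 + O(1); since the two parts add up to a_{k+1}, the
   Acc sum of order k+1 is a_k / 2 + O(1), and dividing by k+1 gives Asc / 2. *)

From HB Require Import structures.
From mathcomp Require Import all_boot all_order all_algebra.
From mathcomp Require Import all_classical all_reals all_analysis.
From mathcomp Require Import finmap lra ring.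
Import Order.TTheory GRing.Theory Num.Theory numFieldNormedType.Exports.
Local Open Scope classical_set_scope.
Local Open Scope ring_scope.

Set Implicit Arguments.
Unset Strict Implicit.
Unset Printing Implicit Defensive.

Section Fekete.
Variables (R : realType) (b : nat -> R).
Hypotheses (b_ge0 : forall n, 0 <= b n)
  (b_subadd : forall m n, b (m + n)%N <= b m + b n).

Lemma subadditive_mul_add q k r : b (q * k + r)%N <= q%:R * b k + b r.
Proof.
elim: q => [|q IH]; first by rewrite mul0n mul0r add0n add0r.
rewrite mulSn -addnA (le_trans (b_subadd _ _)) // -natr1 mulrDl mul1r; lra.
Qed.

Lemma fekete :
  (fun n => n%:R^-1 * b n) @ \oo --> inf [set n%:R^-1 * b n | n in [set n | (0 < n)%N]].
Proof.
set E := [set _ | _ in _].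
have E_lb : has_lbound E by exists 0 => _ [n _ <-]; rewrite mulr_ge0 // invr_ge0.
apply/cvgrPdist_le => e e0.
have hinf : has_inf E by split; [exists (1%:R^-1 * b 1); exists 1%N|].
have [_ [k /= k0 <-] hk] := inf_adherent (divr_gt0 e0 (ltr0n _ 2)) hinf.
set x := k%:R^-1 * b k in hk.
set M := \sum_(r < k) b r.
have bM r : (r < k)%N -> b r <= M.
  by move=> rk; rewrite /M (bigD1 (Ordinal rk)) //= lerDl sumr_ge0.
exists (Num.truncn (M / (e / 2))).+1 => // n /= Nn.
have n0 : (0 < n)%N by apply: leq_trans Nn.
have [k0' n0'] : 0 < k%:R :> R /\ 0 < n%:R :> R by rewrite !ltr0n.
have bk : b k = k%:R * x by rewrite /x mulrA mulfV ?mul1r // gt_eqF.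
have qk : (n %/ k)%:R * k%:R <= n%:R :> R by rewrite -natrM ler_nat leq_divM.
have Mn : M <= n%:R * (e / 2).
  rewrite -ler_pdivrMr ?divr_gt0 //; apply/ltW.
  by apply: (lt_le_trans (truncnS_gt _)); rewrite ler_nat.
have bn : b n <= n%:R * (x + e / 2).
  rewrite {1}(divn_eq n k) (le_trans (subadditive_mul_add _ _ _)) // mulrDr.
  apply: lerD; last by rewrite (le_trans _ Mn) ?bM ?ltn_mod.
  by rewrite bk mulrA ler_wpM2r // /x mulr_ge0 // invr_ge0.
have infE : inf E <= n%:R^-1 * b n by apply: ge_inf => //; exists n.
rewrite distrC ger0_norm ?subr_ge0 // lerBlDl.
have : n%:R^-1 * b n <= x + e / 2 by rewrite ler_pdivrMl.
lra.
Qed.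

End Fekete.

Lemma compact_cover_compact {X : topologicalType} {A : set X} :
  compact A -> cover_compact A.
Proof.
have [[x _]|X0] := pselect (exists x : X, True).
  pose Xp : ptopologicalType := HB.pack X (isPointed.Build X x).
  by rewrite -[compact A]/(@compact Xp A) compact_cover.
move=> _ I D f _ _; exists fset0 => // y.
by exfalso; apply: X0; exists y.
Qed.

Section SetCat.
Context {m n : nat}.

Definition setcat (A : {set 'I_m}) (B : {set 'I_n}) : {set 'I_(m + n)} :=
  @lshift m n @: A :|: @rshift m n @: B.

Lemma mem_setcat_lshift A B i : (lshift n i \in setcat A B) = (i \in A).
Proof.
rewrite finset.in_setU (mem_imset _ _ (@lshift_inj _ _)) orbC.
by case: imsetP => // -[j _ /eqP]; rewrite eq_lrshift.
Qed.

Lemma mem_setcat_rshift A B j : (rshift m j \in setcat A B) = (j \in B).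
Proof.
rewrite finset.in_setU (mem_imset _ _ (@rshift_inj _ _)).
by case: imsetP => // -[i _ /eqP]; rewrite eq_rlshift.
Qed.

Lemma setcat_bij : bijective (fun AB : {set 'I_m} * {set 'I_n} => setcat AB.1 AB.2).
Proof.
exists (fun S : {set 'I_(m + n)} =>
  ([set i | lshift n i \in S]%SET, [set j | rshift m j \in S]%SET)).
  move=> [A B] /=; congr pair; apply/setP => i;
  by rewrite inE ?mem_setcat_lshift ?mem_setcat_rshift.
move=> S; apply/setP => k /=.
by case: (split_ordP k) => i ->; rewrite ?mem_setcat_lshift ?mem_setcat_rshift inE.
Qed.

Lemma big_setcat (V : nmodType) (P : pred {set 'I_(m + n)})
    (F : {set 'I_(m + n)} -> V) :
  \sum_(S | P S) F S = \sum_A \sum_(B | P (setcat A B)) F (setcat A B).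
Proof.
rewrite pair_big_dep (reindex (fun AB => setcat AB.1 AB.2)) //=.
by have [g h1 h2] := setcat_bij; exists g => x _; [exact: h1|exact: h2].
Qed.

End SetCat.

Section SubcoverSize.
Context {X : topologicalType}.
Implicit Type V : set (set X).

Lemma Ncov_min V k : has_subcover_of_size V k -> (Ncov V <= k)%N.
Proof.
rewrite /Ncov => hk; case: pselect => // ex.
by case: ex_minnP => m _; apply; apply/asboolP.
Qed.

Lemma Ncov_subcover V :
  (exists k, has_subcover_of_size V k) -> has_subcover_of_size V (Ncov V).
Proof.
move=> [k hk]; rewrite /Ncov; case: pselect => [ex|nex].
  by case: ex_minnP => m /asboolP.
by exfalso; apply: nex; exists k; apply/asboolP.
Qed.

Lemma subcover_of_size_card (I : finType) V (f : I -> set X) :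
  (forall i, V (f i)) -> (forall x, exists i, f i x) ->
  has_subcover_of_size V #|I|.
Proof.
move=> Vf fcov; exists (f \o enum_val); split => [i|x]; first exact: Vf.
by have [i fx] := fcov x; exists (enum_rank i); rewrite /= enum_rankK.
Qed.

End SubcoverSize.

Lemma continuous_iter (X : topologicalType) (T : X -> X) k :
  continuous T -> continuous (iter k T).
Proof.
move=> Tc; elim: k => [|k IH] x /=; first exact: cvg_id.
exact: (continuous_comp (IH x) (Tc _)).
Qed.

Section JoinCover.
Context {X : topologicalType} (T : X -> X) (U : set (set X)).

Lemma joinS_setcat m n (A : {set 'I_m}) (B : {set 'I_n}) V W :
  joinS T U A V -> joinS T U B W ->
  joinS T U (setcat A B) (V `&` iter m T @^-1` W).
Proof.
move=> [f [Uf ->]] [g [Ug ->]].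
exists (fun k => match fintype.split k with inl i => f i | inr j => g j end); split.
  by move=> k; case: (split_ordP k) => i ->;
    rewrite ?mem_setcat_lshift ?mem_setcat_rshift; [exact: Uf|exact: Ug].
apply/seteqP; split => x /=.
  move=> [fx gx] k; case: (split_ordP k) => i ->.
    rewrite /mkset mem_setcat_lshift; exact: fx.
  by rewrite /mkset mem_setcat_rshift /= addnC iterD; exact: gx.
move=> h; split => [i iA|j jB].
  by have := h (unsplit (inl i)); rewrite unsplitK /= mem_setcat_lshift; apply.
have := h (unsplit (inr j)); rewrite unsplitK /= mem_setcat_rshift addnC iterD.
exact.
Qed.

Hypotheses (T_cont : continuous T) (U_open : forall A, U A -> open A)
  (U_cover : \bigcup_(A in U) A = [set: X]) (X_compact : compact [set: X]).

Lemma joinS_open n (S : {set 'I_n}) V : joinS T U S V -> open V.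
Proof.
move=> [f [Uf ->]]; rewrite openE => x Vx.
have : \forall y \near x, forall i : 'I_n, i \in S -> f i (iter i T y).
  apply: filter_forall => i; have [iS|] := boolP (i \in S); last first.
    by move=> /negP iS; apply: nearW.
  have fi_open : open (iter i T @^-1` f i).
    by apply: open_comp => [y _|]; [exact: continuous_iter|exact: U_open (Uf i iS)].
  by apply: filterS (open_nbhs_nbhs (conj fi_open (Vx i iS))) => y.
by apply: filterS => y fy i /= iS; exact: fy.
Qed.

Lemma joinS_cover n (S : {set 'I_n}) x : exists2 V, joinS T U S V & V x.
Proof.
have Ux i : exists A, U A /\ A (iter i T x).
  by have : [set: X] (iter i T x) by []; rewrite -U_cover => -[A UA Ax]; exists A.
have [f fP] := choice Ux.
exists (\bigcap_(i in [set` S]) iter i T @^-1` f i) => [|i _]; last exact: (fP i).2.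
by exists f; split => // i _; exact: (fP i).1.
Qed.

Lemma joinS_finite_subcover n (S : {set 'I_n}) :
  exists k, has_subcover_of_size (joinS T U S) k.
Proof.
have [|D DS Dcov] := compact_cover_compact X_compact (@joinS_open _ S).
  by move=> x _; have [V SV Vx] := joinS_cover S x; exists V.
exists #|{: D}|; apply: (subcover_of_size_card (f := fun V : D => val V)).
  by move=> V; have := DS _ (fsvalP V); rewrite in_setE.
by move=> x; have [V /= DV Vx] := Dcov x I; exists [` DV]%fset.
Qed.

Lemma Ncov_joinS_setcat m n (A : {set 'I_m}) (B : {set 'I_n}) :
  (Ncov (joinS T U (setcat A B)) <= Ncov (joinS T U A) * Ncov (joinS T U B))%N.
Proof.
have [f [Af fcov]] := Ncov_subcover (joinS_finite_subcover A).
have [g [Bg gcov]] := Ncov_subcover (joinS_finite_subcover B).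
pose h ij := f ij.1 `&` iter m T @^-1` g ij.2.
apply: leq_trans (Ncov_min (subcover_of_size_card (f := h) _ _)) _ => [ij|x|].
- exact: joinS_setcat.
- by have [i fx] := fcov x; have [j gx] := gcov (iter m T x); exists (i, j).
by rewrite card_prod !card_ord.
Qed.

End JoinCover.

Lemma ln_nat_ge0 (R : realType) k : 0 <= ln (k%:R : R).
Proof. by case: k => [|k]; [rewrite ln0|rewrite ln_ge0 // ler1n]. Qed.

Lemma ln_natM_le (R : realType) (a b c : nat) :
  (a <= b * c)%N -> ln (a%:R : R) <= ln b%:R + ln c%:R.
Proof.
case: a => [|a] abc; first by rewrite ln0 // addr_ge0 ?ln_nat_ge0.
have [b0 c0] : (0 < b)%N /\ (0 < c)%N.
  by apply/andP; rewrite -muln_gt0 (leq_trans _ abc).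
by rewrite -lnM ?posrE ?ltr0n // -natrM ler_ln ?posrE ?ltr0n ?muln_gt0 ?b0 ?ler_nat.
Qed.

Lemma card_set_ord n : #|{: {set 'I_n}}| = (2 ^ n)%N.
Proof. by rewrite -cardsT -powersetT card_powerset cardsT card_ord. Qed.

Lemma set_ord1_cases (A : {set 'I_1}) : A = finset.set0 \/ A = [set: 'I_1]%SET.
Proof.
have [A0|A0] := boolP (ord0 \in A); [right|left]; apply/setP => i;
  by rewrite (ord1 i) ?inE ?A0 // (negbTE A0).
Qed.

Lemma big_set_ord1 (V : nmodType) (F : {set 'I_1} -> V) :
  \sum_A F A = F finset.set0 + F [set: 'I_1]%SET.
Proof.
rewrite (bigD1 finset.set0) // (bigD1 [set: 'I_1]%SET) /= ?big_pred0 ?addr0 //.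
  by move=> A; case: (set_ord1_cases A) => ->; rewrite eqxx ?andbF.
by apply/negP => /eqP/setP/(_ ord0); rewrite !inE.
Qed.

Lemma has0_setcat1 k (A : {set 'I_1}) (B : {set 'I_k}) :
  has0 (setcat A B) = (ord0 \in A).
Proof.
apply/existsP/idP => [[i /andP[]]|A0]; last first.
  by exists (lshift k ord0); rewrite mem_setcat_lshift A0.
by case: (split_ordP i) => j ->; rewrite ?mem_setcat_lshift ?(ord1 j) //= add1n.
Qed.

Section AverageComplexity.
Context {X : topologicalType} (R : realType) (T : X -> X) (U : set (set X)).
Hypotheses (T_cont : continuous T) (U_open : forall A, U A -> open A)
  (U_cover : \bigcup_(A in U) A = [set: X]) (X_compact : compact [set: X]).

Definition logN n (S : {set 'I_n}) : R := ln (Ncov (joinS T U S))%:R.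
Definition asc_sum n : R := \sum_(S : {set 'I_n}) 2%:R ^- n * logN S.
Definition acc_sum n : R := \sum_(S : {set 'I_n} | has0 S) 2%:R ^- n * logN S.

Lemma logN_ge0 n (S : {set 'I_n}) : 0 <= logN S.
Proof. exact: ln_nat_ge0. Qed.

Lemma asc_sum_ge0 n : 0 <= asc_sum n.
Proof. by apply: sumr_ge0 => S _; rewrite mulr_ge0 ?logN_ge0 ?invr_ge0 ?exprn_ge0. Qed.

Lemma logN_setcat m n (A : {set 'I_m}) (B : {set 'I_n}) :
  logN (setcat A B) <= logN A + logN B.
Proof. exact/ln_natM_le/Ncov_joinS_setcat. Qed.

Lemma sum_logN_setcat_le m n (A : {set 'I_m}) :
  \sum_(B : {set 'I_n}) 2%:R ^- (m + n) * logN (setcat A B) <=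
  2%:R ^- m * (logN A + asc_sum n).
Proof.
have pow2_neq0 i : (2%:R ^+ i : R) != 0 by rewrite expf_neq0 ?pnatr_eq0.
have -> : 2%:R ^- m * (logN A + asc_sum n) =
    \sum_(B : {set 'I_n}) (2%:R ^- (m + n) * logN A + 2%:R ^- (m + n) * logN B).
  rewrite big_split /= sumr_const card_set_ord /asc_sum mulrDr mulr_sumr.
  congr (_ + _); last by apply: eq_bigr => B _; rewrite exprD invfM mulrA.
  by rewrite exprD invfM -(mulr_natr _ (2 ^ n)) natrX; field; rewrite !pow2_neq0.
by apply: ler_sum => B _; rewrite -mulrDr ler_wpM2l ?logN_setcat ?invr_ge0 ?exprn_ge0.
Qed.

Lemma asc_sum_subadditive m n : asc_sum (m + n) <= asc_sum m + asc_sum n.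
Proof.
rewrite {1}/asc_sum big_setcat.
apply: le_trans (ler_sum _ (fun A _ => sum_logN_setcat_le n A)) _.
rewrite (eq_bigr _ (fun A _ => mulrDr _ _ _)) big_split /= lerD2l.
rewrite sumr_const card_set_ord -(mulr_natr _ (2 ^ m)) natrX mulrAC.
by rewrite mulVf ?mul1r ?expf_neq0 ?pnatr_eq0.
Qed.

Lemma acc_sum_succE k : acc_sum (1 + k) =
  \sum_(B : {set 'I_k}) 2%:R ^- (1 + k) * logN (setcat [set: 'I_1]%SET B).
Proof.
rewrite /acc_sum big_setcat big_set_ord1.
under eq_bigl do rewrite has0_setcat1 finset.in_set0.
under [X in _ + X]eq_bigl do rewrite has0_setcat1 finset.in_setT.
by rewrite big_pred0_eq add0r.
Qed.

Lemma asc_sum_succE k : asc_sum (1 + k) =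
  \sum_(B : {set 'I_k}) 2%:R ^- (1 + k) * logN (setcat (finset.set0 : {set 'I_1}) B)
  + acc_sum (1 + k).
Proof. by rewrite acc_sum_succE /asc_sum big_setcat big_set_ord1. Qed.

Lemma acc_sum_succ_bounds k :
  let c := (logN [set: 'I_1]%SET + logN (finset.set0 : {set 'I_1})) / 2 in
  asc_sum k.+1 - (c + asc_sum k / 2) <= acc_sum k.+1 <= c + asc_sum k / 2.
Proof.
have := sum_logN_setcat_le k [set: 'I_1]%SET; rewrite -acc_sum_succE expr1.
have := sum_logN_setcat_le k (finset.set0 : {set 'I_1}); rewrite expr1.
have := asc_sum_succE k; have := logN_ge0 [set: 'I_1]%SET.
have := logN_ge0 (finset.set0 : {set 'I_1}).
rewrite -[k.+1]/(1 + k)%N /=; lra.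
Qed.

End AverageComplexity.

Lemma cvg_half_of_bounds (R : realType) (a x : R^nat) (L c : R) :
  (fun n => n%:R^-1 * a n) @ \oo --> L ->
  (forall k, a k.+1 - (c + a k / 2) <= x k.+1 <= c + a k / 2) ->
  (fun n => n%:R^-1 * x n) @ \oo --> L / 2.
Proof.
move=> aL bounds; pose w k : R := k.+1%:R^-1.
have w0 : w k @[k --> \oo] --> 0 := cvg_harmonic.
have wS0 : w k.+1 @[k --> \oo] --> 0 by rewrite cvg_shiftS.
have waS : (w k * a k.+1) @[k --> \oo] --> L by rewrite -cvg_shiftS in aL.
have wa : (w k * a k) @[k --> \oo] --> L.
  rewrite -cvg_shiftS.
  have -> : (fun k => w k.+1 * a k.+1) = (fun k => w k * a k.+1 * (1 - w k.+1)).
    apply/funext => k; rewrite /w; field.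
    by have := ler0n R k => k0; apply/andP; split; rewrite gt_eqF //; lra.
  have -> : L = L * (1 - 0) by rewrite subr0 mulr1.
  by apply: cvgM => //; apply: cvgB => //; exact: cvg_cst.
rewrite -cvg_shiftS; apply: (@squeeze_cvgr _ _ _ _
  (fun k => w k * a k.+1 - (w k * c + w k * a k / 2))
  (fun k => w k * c + w k * a k / 2)).
- apply: nearW => k /=; have wk0 : 0 <= w k by rewrite invr_ge0.
  have /andP[lo up] := bounds k.
  rewrite -!mulrA -!mulrDr -mulrBr !ler_wpM2l //.
- have -> : L / 2 = L - (0 * c + L / 2) by rewrite mul0r add0r; field.
  by apply: cvgB => //; apply: cvgD; apply: cvgM => //; exact: cvg_cst.
have -> : L / 2 = 0 * c + L / 2 by rewrite mul0r add0r.
by apply: cvgD; apply: cvgM => //; exact: cvg_cst.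
Qed.

Theorem proposition2p5 (R : realType) (X : topologicalType) (T : X -> X)
  (U : set (set X)) :
  hausdorff_space X -> compact [set: X] -> continuous T ->
  (forall A, U A -> open A) -> \bigcup_(A in U) A = [set: X] ->
  cvgn (asc_seq R T U) /\
  acc_seq R T U @ \oo --> limn (asc_seq R T U) / 2.
Proof.
move=> _ X_compact T_cont U_open U_cover.
have asc_cvg : cvgn (asc_seq R T U).
  exact/cvgP/(fekete (@asc_sum_ge0 _ R T U))/asc_sum_subadditive.
split => //; apply: (cvg_half_of_bounds asc_cvg).
exact: acc_sum_succ_bounds.
Qed.
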